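(* Let $G=(V,E)$ be a simple directed acyclic graph with capacities $C\in\mathbb{R}_{\ge 0}^E$, let $s,t\in V$ be such that a directed $s$-$t$ path exists, and let $\gamma$ satisfy $0<\gamma\le\min_{e\in E}C(e)$. For every $s$-$t$ flow $\mathbf{f}$ with $val(\mathbf{f})<\gamma$ there exists an $s$-$t$ flow $\mathbf{f}'$ with $val(\mathbf{f}')=\gamma$ such that $\Lambda(\mathbf{f}',P)\ge\Lambda(\mathbf{f},P)$ for every set of user paths $P$ (with any admissible initial flow values).
   Context: An $s$-$t$ flow is a vector $\mathbf{f}\in\mathbb{R}^E$ with $0\le\mathbf{f}(e)\le C(e)$ for all $e\in E$ and $\sum_{(u,v)\in E}\mathbf{f}(u,v)=\sum_{(v,u)\in E}\mathbf{f}(v,u)$ for all $v\in V\setminus\{s,t\}$; its value is $val(\mathbf{f})=\sum_{(s,u)\in E}\mathbf{f}(s,u)$. A set of user paths is a set $P=\{p_1,\dots,p_k\}$ of directed paths in $G$ (each viewed as a set of edges; they need not share endpoints nor be disjoint) together with initial flow values $\lambda_1,\dots,\lambda_k\ge 0$ satisfying $\sum_{i:e\in p_i}\lambda_i\le C(e)$ for all $e\in E$. For an $s$-$t$ flow $\mathbf{f}$, $T(\mathbf{f},P)$ is the optimal value of the linear program: maximize $\sum_i\tilde\lambda_i$ subject to $\sum_{i:e\in p_i}\tilde\lambda_i\le C(e)-\mathbf{f}(e)$ for all $e\in E$ and $0\le\tilde\lambda_i\le\lambda_i$ for all $i$. The throughput reduction is $\Lambda(\mathbf{f},P)=\sum_i\lambda_i-T(\mathbf{f},P)$.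 *)

From HB Require Import structures.
From mathcomp Require Import all_boot all_order all_algebra.
From mathcomp Require Import boolp classical_sets reals.
Set Implicit Arguments. Unset Strict Implicit. Unset Printing Implicit Defensive.
Import Order.TTheory GRing.Theory Num.Theory.
Local Open Scope ring_scope.
Local Open Scope classical_set_scope.

(* A directed graph on a finite vertex set V is an edge relation E : rel V
   (no multi-edges by construction). Edge (u,v) exists iff E u v. *)

Definition acyclic (V : finType) (E : rel V) : Prop :=
  forall (x : V) (p : seq V), path E x p -> last x p = x -> p = [::].

Definition st_path_exists (V : finType) (E : rel V) (s t : V) : Prop :=
  exists p : seq V, path E s p /\ last s p = t.

Definition is_flow (R : realType) (V : finType) (E : rel V)
    (C : V -> V -> R) (s t : V) (f : V -> V -> R) : Prop :=
  (forall u v, E u v -> 0 <= f u v <= C u v) /\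
  (forall v, v != s -> v != t ->
     \sum_(u | E u v) f u v = \sum_(w | E v w) f v w).

Definition flow_val (R : realType) (V : finType) (E : rel V)
    (s : V) (f : V -> V -> R) : R :=
  \sum_(u | E s u) f s u.

(* A user path i is a directed walk x i :: ps i in G; its edge set is the
   set of consecutive pairs. *)
Definition on_path (V : finType) (x : V) (p : seq V) (u v : V) : bool :=
  (u, v) \in zip (x :: p) p.

Definition user_paths (R : realType) (V : finType) (E : rel V)
    (C : V -> V -> R) (k : nat) (x : 'I_k -> V) (ps : 'I_k -> seq V)
    (lam : 'I_k -> R) : Prop :=
  (forall i, path E (x i) (ps i)) /\
  (forall i, 0 <= lam i) /\
  (forall u v, E u v -> \sum_(i | on_path (x i) (ps i) u v) lam i <= C u v).

Definition T_feasible (R : realType) (V : finType) (E : rel V)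
    (C : V -> V -> R) (f : V -> V -> R) (k : nat) (x : 'I_k -> V)
    (ps : 'I_k -> seq V) (lam : 'I_k -> R) (lt : 'I_k -> R) : Prop :=
  (forall u v, E u v ->
     \sum_(i | on_path (x i) (ps i) u v) lt i <= C u v - f u v) /\
  (forall i, 0 <= lt i <= lam i).

(* T(f,P): the optimal value of the LP (supremum of the objective over the
   feasible region, which is nonempty and compact). *)
Definition Tval (R : realType) (V : finType) (E : rel V)
    (C : V -> V -> R) (f : V -> V -> R) (k : nat) (x : 'I_k -> V)
    (ps : 'I_k -> seq V) (lam : 'I_k -> R) : R :=
  sup [set \sum_(i < k) lt i | lt in T_feasible E C f x ps lam].

Definition Lambda (R : realType) (V : finType) (E : rel V)
    (C : V -> V -> R) (f : V -> V -> R) (k : nat) (x : 'I_k -> V)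
    (ps : 'I_k -> seq V) (lam : 'I_k -> R) : R :=
  \sum_(i < k) lam i - Tval E C f x ps lam.

(* Augment f by d = gamma - val f along a simple s-t path.  In a DAG no edge
   carries more than val f, so the augmented flow stays below
   val f + d = gamma <= C.  It dominates f edgewise, hence every residual
   capacity C - f' is at most C - f: the LP defining T only loses feasible
   points, so T drops and Lambda grows. *)

From HB Require Import structures.
From mathcomp Require Import all_boot all_order all_algebra.
From mathcomp Require Import boolp classical_sets reals.

Set Implicit Arguments. Unset Strict Implicit. Unset Printing Implicit Defensive.
Import Order.TTheory GRing.Theory Num.Theory.
Local Open Scope ring_scope.

Lemma ler_sum_term (R : numDomainType) (I : finType) (P : pred I) (F : I -> R) i :
  P i -> (forall j, P j -> 0 <= F j) -> F i <= \sum_(j | P j) F j.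
Proof.
move=> Pi F_ge0; rewrite (bigD1 i) //= lerDl sumr_ge0 // => j /andP[Pj _].
exact: F_ge0.
Qed.

Section Cut.
Variables (R : zmodType) (V : finType) (E : rel V) (f : V -> V -> R).

Definition outflow x := \sum_(w | E x w) f x w.
Definition inflow x := \sum_(u | E u x) f u x.
Definition excess x := outflow x - inflow x.

Definition cut_out (A : pred V) :=
  \sum_(x in A) \sum_(w | E x w && (w \notin A)) f x w.
Definition cut_in (A : pred V) :=
  \sum_(x in A) \sum_(u | E u x && (u \notin A)) f u x.

Lemma sum_excess_cut (A : pred V) :
  \sum_(x in A) excess x = cut_out A - cut_in A.
Proof.
have inner_edges : \sum_(x in A) \sum_(w | E x w && (w \in A)) f x w =
                   \sum_(x in A) \sum_(u | E u x && (u \in A)) f u x.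
  rewrite (exchange_big_dep (mem A)) /=; last by move=> x w _ /andP[].
  by apply: eq_bigr => w wA; apply: eq_bigl => x; rewrite wA andbT andbC.
rewrite sumrB /outflow /inflow.
under eq_bigr do rewrite (bigID (mem A)) /=.
under [X in _ - X]eq_bigr do rewrite (bigID (mem A)) /=.
by rewrite !big_split /= inner_edges opprD addrACA subrr add0r.
Qed.

Lemma cut_out_closed (A : pred V) :
  (forall x w, E x w -> x \in A -> w \in A) -> cut_out A = 0.
Proof.
move=> closedA; apply: big1 => x xA; apply: big1 => w /andP[exw].
by rewrite (closedA x w exw xA).
Qed.

Lemma cut_in_closed (A : pred V) :
  (forall u x, E u x -> x \in A -> u \in A) -> cut_in A = 0.
Proof.
move=> closedA; apply: big1 => x xA; apply: big1 => u /andP[eux].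
by rewrite (closedA u x eux xA).
Qed.

End Cut.

Section CutOrder.
Variables (R : numDomainType) (V : finType) (E : rel V) (f : V -> V -> R).
Hypothesis f_ge0 : forall u v, E u v -> 0 <= f u v.

Lemma edge_le_cut_out (A : pred V) a b :
  E a b -> a \in A -> b \notin A -> f a b <= cut_out E f A.
Proof.
move=> eab aA bA.
apply: le_trans
  (ler_sum_term (P := fun w => E a w && (w \notin A)) (F := f a) _ _) _.
- by rewrite eab.
- by move=> w /andP[/f_ge0].
apply: (ler_sum_term (P := mem A)
  (F := fun x => \sum_(w | E x w && (w \notin A)) f x w)) => //.
by move=> x _; apply: sumr_ge0 => w /andP[/f_ge0].
Qed.

Lemma edge_le_cut_in (A : pred V) a b :
  E a b -> a \notin A -> b \in A -> f a b <= cut_in E f A.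
Proof.
move=> eab aA bA.
apply: le_trans
  (ler_sum_term (P := fun u => E u b && (u \notin A)) (F := f^~ b) _ _) _.
- by rewrite eab.
- by move=> u /andP[/f_ge0].
apply: (ler_sum_term (P := mem A)
  (F := fun x => \sum_(u | E u x && (u \notin A)) f u x)) => //.
by move=> x _; apply: sumr_ge0 => u /andP[/f_ge0].
Qed.

End CutOrder.

Lemma acyclic_no_back_path (V : finType) (E : rel V) u v :
  acyclic E -> E u v -> ~~ connect E v u.
Proof.
move=> acyc euv; apply/connectP => -[p pp lp].
by have := acyc u (v :: p); rewrite /= euv pp -lp => /(_ isT erefl).
Qed.

Section Flow.
Variables (R : realType) (V : finType) (E : rel V) (C : V -> V -> R) (s t : V).
Variable f : V -> V -> R.
Hypothesis flow_f : is_flow E C s t f.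

Lemma flow_ge0 u v : E u v -> 0 <= f u v.
Proof. by case: flow_f => cap _ /cap /andP[]. Qed.

Lemma flow_val_ge0 : 0 <= flow_val E s f.
Proof. by apply: sumr_ge0 => u; apply: flow_ge0. Qed.

Lemma sum_excess_eq0 (A : pred V) : s \notin A -> t \notin A ->
  \sum_(x in A) excess E f x = 0.
Proof.
case: flow_f => _ cons sA tA; apply: big1 => x xA.
rewrite /excess /outflow /inflow cons ?subrr //.
- by apply: contraNneq sA => <-.
- by apply: contraNneq tA => <-.
Qed.

Lemma sum_excess_le_val (A : pred V) : t \notin A ->
  \sum_(x in A) excess E f x <= flow_val E s f.
Proof.
move=> tA; have [sA|sA] := boolP (s \in A); last first.
  by rewrite sum_excess_eq0 // flow_val_ge0.
rewrite (bigD1 s) //= sum_excess_eq0 ?addr0.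
- by rewrite lerBlDr lerDl sumr_ge0 // => u; apply: flow_ge0.
- by rewrite unfold_in /= eqxx andbF.
- by rewrite unfold_in /= (negbTE tA).
Qed.

Hypotheses (acyc : acyclic E) (cst : connect E s t).

(* If t reaches a, the vertices reachable from b conserve flow and nothing
   leaves them, so nothing enters them.  Otherwise nothing enters the set of
   vertices that reach a but are unreachable from t, so what leaves it is its
   total excess, which is at most the excess of s. *)
Lemma flow_le_val a b : E a b -> f a b <= flow_val E s f.
Proof.
move=> eab; have ba := acyclic_no_back_path acyc eab.
have cut_eq A := sum_excess_cut E f A.
have [ta|nta] := boolP (connect E t a).
  pose B := [pred x | connect E b x].
  have out0 : cut_out E f B = 0.
    by apply: cut_out_closed => x w exw /connect_trans; apply; apply: connect1.
  have sB : s \notin B.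
    by apply: contraNN ba => /connect_trans/(_ (connect_trans cst ta)).
  have tB : t \notin B by apply: contraNN ba => /connect_trans; apply.
  apply: le_trans (edge_le_cut_in flow_ge0 eab ba (connect0 _ _)) _.
  have in0 : cut_in E f B = 0.
    have := cut_eq B; rewrite sum_excess_eq0 // out0 sub0r => /esym/eqP.
    by rewrite oppr_eq0 => /eqP.
  by rewrite in0 flow_val_ge0.
pose A := [pred x | connect E x a && ~~ connect E t x].
have in0 : cut_in E f A = 0.
  apply: cut_in_closed => u x eux /andP[xa ntx]; apply/andP; split.
    exact: connect_trans (connect1 eux) xa.
  by apply: contraNN ntx => /connect_trans; apply; apply: connect1.
have bA : b \notin A by apply: contraNN ba => /andP[].
have aA : a \in A by rewrite inE connect0.
apply: le_trans (edge_le_cut_out flow_ge0 eab aA bA) _.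
by rewrite -[cut_out _ _ _]subr0 -in0 -cut_eq sum_excess_le_val // inE connect0 andbF.
Qed.

End Flow.

Section Walk.
Variables (V : finType) (s : V) (p : seq V).

Definition walk_mult u v := count_mem (u, v) (zip (s :: p) p).

Lemma sum_walk_mult_in v : (\sum_u walk_mult u v)%N = count_mem v p.
Proof.
rewrite /walk_mult -[in RHS](@unzip2_zip _ _ (s :: p) p) ?leqnSn //.
elim: (zip _ _) => [|[a b] z IH] /=; first by rewrite big1.
rewrite big_split /= IH; congr (_ + _)%N.
have [->|nbv] := eqVneq b v.
  rewrite (bigD1 a) //= eqxx big1 // => u /negbTE nua.
  by rewrite xpair_eqE eq_sym nua.
by rewrite big1 // => u _; rewrite xpair_eqE (negbTE nbv) andbF.
Qed.

Lemma sum_walk_mult_out u : (\sum_v walk_mult u v)%N = count_mem u (belast s p).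
Proof.
have -> : belast s p = unzip1 (zip (s :: p) p).
  by elim: p s => //= y q IH x; rewrite -IH.
rewrite /walk_mult; elim: (zip _ _) => [|[a b] z IH] /=; first by rewrite big1.
rewrite big_split /= IH; congr (_ + _)%N.
have [->|nau] := eqVneq a u.
  rewrite (bigD1 b) //= eqxx big1 // => v /negbTE nvb.
  by rewrite xpair_eqE eqxx eq_sym nvb.
by rewrite big1 // => v _; rewrite xpair_eqE (negbTE nau).
Qed.

Lemma walk_mult_nonedge (E : rel V) u v :
  path E s p -> ~~ E u v -> walk_mult u v = 0%N.
Proof.
move=> walk_p; apply: contraNeq; rewrite -lt0n /walk_mult -has_count has_pred1.
elim: p s walk_p => //= y q IH x /andP[exy pq].
by rewrite inE => /orP[/eqP[-> ->] //|]; apply: IH.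
Qed.

Lemma sum_walk_mult_in_edges (E : rel V) v : path E s p ->
  (\sum_(u | E u v) walk_mult u v)%N = count_mem v p.
Proof.
move=> walk_p; rewrite -sum_walk_mult_in big_mkcond; apply: eq_bigr => u _.
by case: ifP => // /negbT /(walk_mult_nonedge walk_p).
Qed.

Lemma sum_walk_mult_out_edges (E : rel V) u : path E s p ->
  (\sum_(v | E u v) walk_mult u v)%N = count_mem u (belast s p).
Proof.
move=> walk_p; rewrite -sum_walk_mult_out big_mkcond; apply: eq_bigr => v _.
by case: ifP => // /negbT /(walk_mult_nonedge walk_p).
Qed.

Lemma count_walk_ends v :
  (count_mem v (belast s p) + (last s p == v) = (s == v) + count_mem v p)%N.
Proof. by rewrite -[RHS]/(count_mem v (s :: p)) lastI -cats1 count_cat /= addn0. Qed.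

Lemma walk_mult_le1 u v : uniq (s :: p) -> (walk_mult u v <= 1)%N.
Proof.
move=> simple; have le_count : (count_mem u (s :: p) <= 1)%N.
  by rewrite count_uniq_mem ?leq_b1.
apply: leq_trans le_count; rewrite -[count_mem u _]/((s == u) + count_mem u p)%N.
by rewrite -count_walk_ends -sum_walk_mult_out (bigD1 v) //= -addnA leq_addr.
Qed.

End Walk.

Definition augment (R : numDomainType) (V : finType) (f : V -> V -> R) (d : R)
    (s : V) (p : seq V) u v :=
  f u v + d * (walk_mult s p u v)%:R.

Section Augment.
Variables (R : realType) (V : finType) (E : rel V) (C : V -> V -> R) (s t : V).
Variables (f : V -> V -> R) (d : R) (p : seq V).
Hypotheses (walk_p : path E s p) (last_p : last s p = t) (simple_p : uniq (s :: p)).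
Hypothesis d_ge0 : 0 <= d.

Lemma le_augment u v : f u v <= augment f d s p u v.
Proof. by rewrite lerDl mulr_ge0. Qed.

Lemma augment_le u v : augment f d s p u v <= f u v + d.
Proof.
rewrite lerD2l ler_piMr //.
by rewrite -[1]/(1%N%:R : R) ler_nat walk_mult_le1.
Qed.

Lemma outflow_augment x :
  outflow E (augment f d s p) x =
  outflow E f x + d * (count_mem x (belast s p))%:R.
Proof.
by rewrite /outflow big_split /= -mulr_sumr -natr_sum sum_walk_mult_out_edges.
Qed.

Lemma inflow_augment x :
  inflow E (augment f d s p) x = inflow E f x + d * (count_mem x p)%:R.
Proof.
by rewrite /inflow big_split /= -mulr_sumr -natr_sum sum_walk_mult_in_edges.
Qed.

Lemma augment_is_flow : is_flow E C s t f ->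
  (forall u v, E u v -> f u v + d <= C u v) -> is_flow E C s t (augment f d s p).
Proof.
move=> [cap cons] cap_d; split=> [u v euv | v vs vt].
  case/andP: (cap u v euv) => f_ge0 _.
  by rewrite (le_trans f_ge0 (le_augment u v)) (le_trans (augment_le u v)) ?cap_d.
have := inflow_augment v; rewrite /inflow => ->.
have := outflow_augment v; rewrite /outflow => ->.
rewrite cons //; congr (_ + d * _%:R).
have := count_walk_ends s p v; rewrite last_p [t == v]eq_sym [s == v]eq_sym.
by rewrite (negbTE vt) (negbTE vs) addn0.
Qed.

Lemma flow_val_augment : s != t ->
  flow_val E s (augment f d s p) = flow_val E s f + d.
Proof.
move=> st; have /andP[s_notin_p _] := simple_p.
have := outflow_augment s; rewrite /outflow /flow_val => ->.
have := count_walk_ends s p s; rewrite last_p eq_sym (negbTE st) eqxx addn0.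
by rewrite (count_memPn s_notin_p) => ->; rewrite mulr1.
Qed.

End Augment.

Lemma Tval_antimono (R : realType) (V : finType) (E : rel V)
    (C f f' : V -> V -> R) (k : nat) (x : 'I_k -> V) (ps : 'I_k -> seq V)
    (lam : 'I_k -> R) :
  (forall u v, E u v -> f u v <= f' u v <= C u v) -> user_paths E C x ps lam ->
  Tval E C f' x ps lam <= Tval E C f x ps lam.
Proof.
move=> le_f' [_ [lam_ge0 _]]; apply: ge_sup.
  exists 0, (fun=> 0); last by rewrite big1.
  split=> [u v euv|i]; last by rewrite lexx lam_ge0.
  by case/andP: (le_f' u v euv) => _ f'C; rewrite big1 // subr_ge0.
move=> _ [lt [feas lt_le] <-]; apply: ub_le_sup.
  exists (\sum_(i < k) lam i) => _ [l [_ l_le] <-]; apply: ler_sum => i _.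
  by case/andP: (l_le i).
exists lt => //; split=> // u v euv; apply: le_trans (feas u v euv) _.
by case/andP: (le_f' u v euv) => ff' _; rewrite lerD2l lerN2.
Qed.

Theorem mainTheorem1 (R : realType) (V : finType) (E : rel V)
    (C : V -> V -> R) (s t : V) (gamma : R) :
  irreflexive E -> acyclic E ->
  (forall u v, E u v -> 0 <= C u v) ->
  s != t -> st_path_exists E s t ->
  0 < gamma -> (forall u v, E u v -> gamma <= C u v) ->
  forall f : V -> V -> R, is_flow E C s t f -> flow_val E s f < gamma ->
  exists f' : V -> V -> R,
    [/\ is_flow E C s t f', flow_val E s f' = gamma &
      forall (k : nat) (x : 'I_k -> V) (ps : 'I_k -> seq V) (lam : 'I_k -> R),
        user_paths E C x ps lam ->
        Lambda E C f x ps lam <= Lambda E C f' x ps lam].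
Proof.
move=> _ acyc _ st [p0 [walk_p0 last_p0]] _ gamma_le_C f flow_f val_lt.
have cst : connect E s t by apply/connectP; exists p0.
move: last_p0; case: (shortenP walk_p0) => p walk_p simple_p _ last_p.
pose d := gamma - flow_val E s f.
have d_ge0 : 0 <= d by rewrite subr_ge0 ltW.
have cap_d u v : E u v -> f u v + d <= C u v.
  move=> euv; apply: le_trans (gamma_le_C u v euv).
  by rewrite /d addrCA gerDl subr_le0 (flow_le_val flow_f acyc cst euv).
exists (augment f d s p); split.
- exact: augment_is_flow.
- by rewrite (flow_val_augment f d walk_p last_p simple_p st) addrC subrK.
- move=> k x ps lam users; rewrite /Lambda lerD2l lerN2.
  apply: Tval_antimono users => u v euv.
  by rewrite le_augment // (le_trans (augment_le _ _ _ _ _)) ?cap_d.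
Qed.
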